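(* Let $\mathcal H$ be the $5$-uniform hypergraph defined below, let $e,f$ be two edges of $\mathcal H$, and let $\phi : V(\mathcal{H}_{ef}) \to V(\mathcal{H})$ be a monomorphism. If $r, g \in \mathcal{H}_{ef}$, $\phi(r) = r$ and $\phi(g) = g$, then $\phi$ is the identity.
   Context: $\mathcal{H}$ has vertex set $\{z, v_1,\dots,v_9\}$ and edges $r=\{z,v_1,v_3,v_5,v_8\}$, $g=\{z,v_2,v_4,v_7,v_9\}$, $a=\{v_1,v_4,v_6,v_8,v_9\}$, $b=\{v_9,v_1,v_2,v_3,v_4\}$, and $e_i=\{v_i,v_{i+1},v_{i+2},v_{i+3},v_{i+4}\}$ for $i=1,\dots,5$. $\mathcal{H}_{ef}$ is the hypergraph with edge set $E(\mathcal H)\setminus\{e,f\}$, and $V(\mathcal H_{ef})$ is the union of its edges. A monomorphism $\phi: V(\mathcal{H}_{ef})\to V(\mathcal{H})$ is an injective map such that $\phi(x):=\{\phi(y): y\in x\}$ is an edge of $\mathcal H$ for every edge $x$ of $\mathcal H_{ef}$; ''identity'' means $\phi(y)=y$ for all $y\in V(\mathcal H_{ef})$. *)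

From mathcomp Require Import all_boot.
Set Implicit Arguments. Unset Strict Implicit. Unset Printing Implicit Defensive.

Definition vtx := 'I_10.
Definition z : vtx := inord 0.
Definition v (i : nat) : vtx := inord i.

Definition r_edge : {set vtx} := [set z; v 1; v 3; v 5; v 8].
Definition g_edge : {set vtx} := [set z; v 2; v 4; v 7; v 9].
Definition a_edge : {set vtx} := [set v 1; v 4; v 6; v 8; v 9].
Definition b_edge : {set vtx} := [set v 9; v 1; v 2; v 3; v 4].
Definition e_edge (i : nat) : {set vtx} :=
  [set v i; v i.+1; v i.+2; v i.+3; v i.+4].

Definition H : {set {set vtx}} :=
  [set r_edge; g_edge; a_edge; b_edge;
       e_edge 1; e_edge 2; e_edge 3; e_edge 4; e_edge 5].

Definition H_ef (e f : {set vtx}) : {set {set vtx}} := H :\ e :\ f.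

Definition V_ef (e f : {set vtx}) : {set vtx} := cover (H_ef e f).

(* phi : V(H_ef) -> V(H) is a monomorphism; phi is given as a total function
   on vtx of which only the restriction to V(H_ef) matters. *)
Definition monomorphism (e f : {set vtx}) (phi : vtx -> vtx) : Prop :=
  {in V_ef e f &, injective phi} /\
  forall x, x \in H_ef e f -> phi @: x \in H.

From mathcomp Require Import all_boot.

Set Implicit Arguments.
Unset Strict Implicit.
Unset Printing Implicit Defensive.

(* Since phi r = r and phi g = g, phi fixes z, the only common vertex of r and
   g, permutes r \ {z} and g \ {z}, and fixes v_6, the only vertex outside
   r u g.  So on V(H_ef) phi agrees with one of 24 * 24 relabelings of the
   rim (r u g) \ {z}.  A computation shows that every relabeling other than
   the identity sends at least three edges of H outside H, whereas phi may
   only do so for e and f. *)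

Section Relabel.
Variable T : eqType.

Definition relabel (dom cod : seq T) (x : T) : T := nth x cod (index x dom).

Lemma relabel_id dom x : relabel dom dom x = x.
Proof.
rewrite /relabel; have [/nth_index // | xNdom] := boolP (x \in dom).
by rewrite memNindex // nth_default.
Qed.

Lemma relabel_map (D : pred T) (f : T -> T) dom :
  (forall x, x \in D -> x \notin dom -> f x = x) ->
  {in D, f =1 relabel dom (map f dom)}.
Proof.
move=> f_fix x xD; rewrite /relabel.
have [xdom | xNdom] := boolP (x \in dom).
  by rewrite (nth_map x) ?index_mem // nth_index.
by rewrite memNindex // nth_default ?size_map // f_fix.
Qed.

Lemma perm_map_stable (f : T -> T) (s : seq T) :
  uniq s -> {in s &, injective f} -> {subset map f s <= s} ->
  perm_eq (map f s) s.
Proof.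
move=> s_uniq f_inj f_s.
have fs_uniq : uniq (map f s) by rewrite map_inj_in_uniq.
apply: uniq_perm => //.
by have [] := uniq_min_size fs_uniq f_s; rewrite size_map.
Qed.

End Relabel.

(* Unlike [inord], this reduces under [vm_compute]. *)
Definition ord_of (k : nat) : vtx := Ordinal (ltn_pmod k (isT : 0 < 10)).

Lemma v_ord_of k : k < 10 -> v k = ord_of k.
Proof. by move=> k_lt10; apply: val_inj; rewrite /= inordK // modn_small. Qed.

Lemma z_ord_of : z = ord_of 0.
Proof. exact: v_ord_of. Qed.

Ltac vertex_cases :=
  let x := fresh "x" in
  move=> x; rewrite ?inE ?z_ord_of ?v_ord_of //; move: x;
  case=> [[|[|[|[|[|[|[|[|[|[|[]]]]]]]]]]]] //.

Definition r_rim : seq vtx := map ord_of [:: 1; 3; 5; 8].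
Definition g_rim : seq vtx := map ord_of [:: 2; 4; 7; 9].
Definition rim : seq vtx := r_rim ++ g_rim.

Lemma r_edgeD1 : r_edge :\ z = [set x in r_rim].
Proof. by apply/setP; vertex_cases. Qed.

Lemma g_edgeD1 : g_edge :\ z = [set x in g_rim].
Proof. by apply/setP; vertex_cases. Qed.

Lemma r_edgeI_g_edge : r_edge :&: g_edge = [set z].
Proof. by apply/setP; vertex_cases. Qed.

Lemma notin_r_g_edge x : x \notin r_edge -> x \notin g_edge -> x == v 6.
Proof. by move: x; vertex_cases. Qed.

Lemma notin_rim x : x \notin rim -> (x == z) || (x == v 6).
Proof. by move: x; vertex_cases. Qed.

Definition edge_seqs : seq (seq vtx) :=
  map (map ord_of)
    [:: [:: 0; 1; 3; 5; 8]; [:: 0; 2; 4; 7; 9]; [:: 1; 4; 6; 8; 9];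
        [:: 1; 2; 3; 4; 9]; [:: 1; 2; 3; 4; 5]; [:: 2; 3; 4; 5; 6];
        [:: 3; 4; 5; 6; 7]; [:: 4; 5; 6; 7; 8]; [:: 5; 6; 7; 8; 9]].

Lemma edge_seqsE :
  [seq [set x in s] | s <- edge_seqs] =
  [:: r_edge; g_edge; a_edge; b_edge;
      e_edge 1; e_edge 2; e_edge 3; e_edge 4; e_edge 5].
Proof.
by rewrite /=; congr [:: _; _; _; _; _; _; _; _; _]; apply/setP; vertex_cases.
Qed.

Lemma mem_H X : (X \in H) = (X \in [seq [set x in s] | s <- edge_seqs]).
Proof. by rewrite edge_seqsE !inE !orbA. Qed.

Lemma edge_seqs_uniq : uniq edge_seqs.
Proof. by vm_compute. Qed.

Lemma edge_set_inj : {in edge_seqs &, injective (fun s => [set x in s])}.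
Proof.
have sorted_seqs : all (sorted (fun x y : vtx => x < y)) edge_seqs.
  by vm_compute.
move=> s t s_in t_in /setP st.
apply: (@irr_sorted_eq _ (fun x y : vtx => x < y)).
- by move=> ? ? ?; apply: ltn_trans.
- by move=> ?; apply: ltnn.
- exact: (allP sorted_seqs).
- exact: (allP sorted_seqs).
by move=> x; have := st x; rewrite !inE.
Qed.

Definition maps_into_edges (psi : vtx -> vtx) (s : seq vtx) : bool :=
  has (fun t => all (fun x => psi x \in t) s) edge_seqs.

Definition broken_edges (psi : vtx -> vtx) : seq (seq vtx) :=
  [seq s <- edge_seqs | ~~ maps_into_edges psi s].

Definition rim_rigidity : bool :=
  all (fun s => all (fun t =>
         (s ++ t == rim) || (2 < size (broken_edges (relabel rim (s ++ t)))))
       (permutations g_rim))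
    (permutations r_rim).

Lemma rim_rigidityT : rim_rigidity.
Proof. by vm_compute. Qed.

Lemma rim_relabel_rigid s t :
  perm_eq s r_rim -> perm_eq t g_rim ->
  size (broken_edges (relabel rim (s ++ t))) <= 2 -> s ++ t = rim.
Proof.
rewrite -!mem_permutations => s_perm t_perm few_broken.
have /orP[/eqP // | many_broken] := allP (allP rim_rigidityT s s_perm) t t_perm.
by rewrite ltnNge few_broken in many_broken.
Qed.

Section Monomorphism.
Variables (e f : {set vtx}) (phi : vtx -> vtx).
Hypothesis phi_inj : {in V_ef e f &, injective phi}.
Hypothesis phi_edge : forall X, X \in H_ef e f -> phi @: X \in H.
Hypotheses (r_in : r_edge \in H_ef e f) (g_in : g_edge \in H_ef e f).
Hypotheses (phi_r : phi @: r_edge = r_edge) (phi_g : phi @: g_edge = g_edge).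

Lemma mem_V X x : X \in H_ef e f -> x \in X -> x \in V_ef e f.
Proof. by move=> X_in; apply/subsetP/bigcup_sup. Qed.

Lemma z_in_V : z \in V_ef e f.
Proof. by apply: (mem_V r_in); rewrite !inE eqxx. Qed.

Lemma phi_z : phi z = z.
Proof.
have : phi z \in r_edge :&: g_edge.
  by rewrite inE -{1}phi_r -phi_g !imset_f // !inE eqxx.
by rewrite r_edgeI_g_edge inE => /eqP.
Qed.

Lemma phi_notin_imset X x :
  X \in H_ef e f -> x \in V_ef e f -> x \notin X -> phi x \notin phi @: X.
Proof.
move=> X_in xV xNX; apply/imsetP => -[y yX phi_xy].
by rewrite (phi_inj xV (mem_V X_in yX) phi_xy) yX in xNX.
Qed.

Lemma phi_v6 : v 6 \in V_ef e f -> phi (v 6) = v 6.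
Proof.
move=> v6V; apply/eqP/notin_r_g_edge.
  by rewrite -{1}phi_r phi_notin_imset // !inE z_ord_of !v_ord_of.
by rewrite -{1}phi_g phi_notin_imset // !inE z_ord_of !v_ord_of.
Qed.

Lemma perm_map_phi X s :
  X \in H_ef e f -> phi @: X = X -> X :\ z = [set x in s] -> uniq s ->
  perm_eq (map phi s) s.
Proof.
move=> X_in phiX Xs s_uniq.
have sX x : x \in s -> x \in X :\ z by rewrite Xs inE.
have sV x : x \in s -> x \in V_ef e f.
  by move/sX/setD1P=> [_ xX]; apply: (mem_V X_in).
apply: perm_map_stable => // [x y xs ys | _ /mapP[x xs ->]].
  by apply: phi_inj; apply: sV.
have /setD1P[xz xX] := sX x xs.
have phix_z : phi x != z.
  apply: contra_neq xz; rewrite -{1}phi_z.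
  by apply: phi_inj; [apply: sV | apply: z_in_V].
suff : phi x \in [set x in s] by rewrite inE.
by rewrite -Xs !inE phix_z -{1}phiX imset_f.
Qed.

Lemma phi_relabel : {in V_ef e f, phi =1 relabel rim (map phi rim)}.
Proof.
apply: relabel_map => x xV /notin_rim /orP[] /eqP x_eq; rewrite x_eq ?phi_z //.
by apply: phi_v6; rewrite -x_eq.
Qed.

Lemma maps_into_edges_phi s :
  s \in edge_seqs -> [set x in s] \in H_ef e f ->
  maps_into_edges (relabel rim (map phi rim)) s.
Proof.
move=> s_in Xs_in.
have := phi_edge Xs_in; rewrite mem_H => /mapP[t t_in phis].
apply/hasP; exists t => //; apply/allP => x xs.
have xV : x \in V_ef e f by apply: (mem_V Xs_in); rewrite inE.
suff : phi x \in [set x in t] by rewrite -phi_relabel // inE.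
by rewrite -phis imset_f // inE.
Qed.

Lemma size_broken_edges :
  size (broken_edges (relabel rim (map phi rim))) <= 2.
Proof.
set B := broken_edges _.
have B_sub : {subset B <= edge_seqs} by move=> s; rewrite mem_filter => /andP[].
have -> : size B = size [seq [set x in s] | s <- B] by rewrite size_map.
apply: (@uniq_leq_size _ _ [:: e; f]).
  rewrite map_inj_in_uniq ?filter_uniq ?edge_seqs_uniq //.
  by move=> s t /B_sub s_in /B_sub t_in; apply: edge_set_inj.
move=> _ /mapP[s s_B ->]; have s_in := B_sub s s_B.
move: s_B; rewrite mem_filter => /andP[broken _].
rewrite !inE; apply: contraNT broken => /norP[ne nf].
by apply: maps_into_edges_phi; rewrite // /H_ef !in_setD1 ne nf mem_H map_f.
Qed.

Lemma phi_fixes_V : {in V_ef e f, phi =1 id}.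
Proof.
have perm_r : perm_eq (map phi r_rim) r_rim.
  exact: perm_map_phi r_in phi_r r_edgeD1 _.
have perm_g : perm_eq (map phi g_rim) g_rim.
  exact: perm_map_phi g_in phi_g g_edgeD1 _.
have := size_broken_edges.
rewrite /rim map_cat => /(rim_relabel_rigid perm_r perm_g) phi_rim y yV.
by rewrite phi_relabel // /rim map_cat phi_rim relabel_id.
Qed.

End Monomorphism.

Theorem lemma4p6 (e f : {set vtx}) (phi : vtx -> vtx) :
  e \in H -> f \in H -> e != f ->
  monomorphism e f phi ->
  r_edge \in H_ef e f -> g_edge \in H_ef e f ->
  phi @: r_edge = r_edge -> phi @: g_edge = g_edge ->
  forall y, y \in V_ef e f -> phi y = y.
Proof.
(* Counting broken edges does not need e, f to be distinct edges of H. *)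
move=> _ _ _ [phi_inj phi_edge] r_in g_in phi_r phi_g.
exact: phi_fixes_V.
Qed.
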